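(* Let $A$ be a finite abelian group of even exponent $m$. If $A$ has no sections isomorphic to any of $Z_2^3$, $Z_4\times Z_2$, $Z_p^2$, $Z_p\times Z_2^2$, where $p$ ranges over the odd prime divisors of $m$, then $A$ is isomorphic to a section of the dihedral group $D_{2m}=\langle a,b\mid a^m=b^2=1,\ b^{-1}ab=a^{-1}\rangle$.
   Context: $Z_n$ denotes the cyclic group of order $n$; a section of a group is a quotient of one of its subgroups. *)

From mathcomp Require Import all_boot all_fingroup all_solvable.
From mathcomp Require Import zmodp.
From mathcomp Require Export extremal.

Set Implicit Arguments.
Unset Strict Implicit.
Unset Printing Implicit Defensive.

Local Open Scope group_scope.

Definition has_section (gT rT : finGroupType) (G : {set gT}) (H : {set rT}) :=
  exists (K N : {group gT}), [/\ K \subset G, N <| K & (K / N) \isog H].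

(* Concrete cyclic groups Z_n are the additive groups 'Z_n (n >= 2);         *)
Definition Z2cube := [set: ('Z_2 * 'Z_2 * 'Z_2)%type].
Definition Z4xZ2 := [set: ('Z_4 * 'Z_2)%type].
Definition Zpsq (p : nat) := [set: ('Z_p * 'Z_p)%type].
Definition ZpxZ2sq (p : nat) := [set: ('Z_p * 'Z_2 * 'Z_2)%type].

From mathcomp Require Import all_boot all_fingroup all_solvable.
From mathcomp Require Import zmodp extremal.

(* If 'r_2(A) <= 1 then every p-rank of A is at most 1 (for odd p a larger
   p-rank yields a subgroup Z_p^2), so A is cyclic of order exponent A = m and
   embeds in the rotation subgroup of D_2m. Otherwise A contains a Klein
   four-group E, and for any cyclic C <= A some involution v of E lies outside
   C, giving C x Z_2 = C<v> <= A. With C of order 4 this gives Z_4 x Z_2;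
   with C of odd prime order p it gives the cyclic group Z_p x Z_2, and
   repeating the step gives Z_p x Z_2^2. Hence m = 2, so A = E, and the
   Klein four-group is D_4. *)

Set Implicit Arguments.
Unset Strict Implicit.
Unset Printing Implicit Defensive.

Local Open Scope group_scope.

Lemma sub_has_section (gT rT : finGroupType) (G K : {group gT}) (H : {group rT}) :
  K \subset G -> K \isog H -> has_section G H.
Proof.
move=> sKG isoKH; exists K, 1%G; split; rewrite ?normal1 //.
exact: isog_trans (isog_symr (quotient1_isog K)) isoKH.
Qed.

Lemma setXTT (T1 T2 : finType) : setX [set: T1] [set: T2] = [set: T1 * T2].
Proof. by apply/setP => -[x1 x2]; rewrite !inE. Qed.

Lemma card_setT_prod (T1 T2 : finType) :
  #|[set: T1 * T2]| = (#|[set: T1]| * #|[set: T2]|)%N.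
Proof. by rewrite !cardsT card_prod. Qed.

Section ProductGroups.

Variables T1 T2 : finGroupType.

Let defT := setX_dprod [set: T1]%G [set: T2]%G.
Let isoT1 := isog_setX1 T2 [set: T1]%G.
Let isoT2 := isog_set1X T1 [set: T2]%G.

Lemma dprod_isog_setT (gT : finGroupType) (G X Y : {group gT}) :
  X \x Y = G -> X \isog [set: T1] -> Y \isog [set: T2] -> G \isog [set: T1 * T2].
Proof.
move=> defG isoX isoY; rewrite -setXTT.
apply: (isog_dprod defG defT).
  exact: isog_trans isoX isoT1.
exact: isog_trans isoY isoT2.
Qed.

Lemma abelem_setT_prod p :
  p.-abelem [set: T1] -> p.-abelem [set: T2] -> p.-abelem [set: T1 * T2].
Proof.
rewrite -setXTT (dprod_abelem p defT) -(isog_abelem isoT1) -(isog_abelem isoT2).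
by move=> -> ->.
Qed.

Lemma cyclic_setT_prod :
  cyclic [set: T1] -> cyclic [set: T2] -> coprime #|[set: T1]| #|[set: T2]| ->
  cyclic [set: T1 * T2].
Proof.
move=> cT1 cT2; rewrite -setXTT (cyclic_dprod defT).
- by rewrite -(card_isog isoT1) -(card_isog isoT2).
- by rewrite -(isog_cyclic isoT1).
by rewrite -(isog_cyclic isoT2).
Qed.

End ProductGroups.

Lemma Zp_cyclic n : cyclic [set: 'Z_n].
Proof. by rewrite Zp_cycle cycle_cyclic. Qed.

Lemma card_Zp_setT n : 1 < n -> #|[set: 'Z_n]| = n.
Proof. by move=> n_gt1; rewrite cardsT card_ord Zp_cast. Qed.

Lemma Zp_abelem p : prime p -> p.-abelem [set: 'Z_p].
Proof. by move=> p_pr; rewrite prime_abelem ?card_Zp_setT ?prime_gt1. Qed.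

Lemma isog_cycle_Zp (gT : finGroupType) (x : gT) n :
  #[x] = n -> 1 < n -> <[x]> \isog [set: 'Z_n].
Proof.
move=> ox n_gt1; rewrite isog_cyclic_card ?cycle_cyclic // Zp_cyclic.
by rewrite card_Zp_setT // -ox eqxx.
Qed.

Lemma abelem_has_section p n (gT rT : finGroupType) (G : {group gT}) (H : {group rT}) :
  p.-abelem H -> #|H| = (p ^ n)%N -> n <= 'r_p(G) -> has_section G H.
Proof.
move=> abH oH /p_rank_geP[E /pnElemPcard[sEG abE oE]].
by apply: sub_has_section sEG _; rewrite (isog_abelem_card _ abE) abH oH oE eqxx.
Qed.

Lemma has_section_Zpsq p (gT : finGroupType) (G : {group gT}) :
  prime p -> 1 < 'r_p(G) -> has_section G (Zpsq p).
Proof.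
move=> p_pr; apply: abelem_has_section; first by rewrite abelem_setT_prod ?Zp_abelem.
by rewrite card_setT_prod card_Zp_setT ?prime_gt1.
Qed.

Lemma has_section_Z2cube (gT : finGroupType) (G : {group gT}) :
  2 < 'r_2(G) -> has_section G Z2cube.
Proof.
apply: abelem_has_section; first by rewrite !abelem_setT_prod ?Zp_abelem.
by rewrite !card_setT_prod !card_Zp_setT.
Qed.

Lemma abelian_cyclic_no_Zpsq (gT : finGroupType) (G : {group gT}) :
    abelian G -> 'r_2(G) <= 1 ->
    (forall p, prime p -> odd p -> p %| #|G| -> ~ has_section G (Zpsq p)) ->
  cyclic G.
Proof.
move=> cG r2_le1 noZpsq; rewrite abelian_rank1_cyclic //.
have [p p_pr ->] := rank_witness G; have [-> // | odd_p] := even_prime p_pr.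
rewrite leqNgt; apply/negP => r_gt1.
apply: (noZpsq p p_pr odd_p); last exact: has_section_Zpsq.
by move: (ltnW r_gt1); rewrite p_rank_gt0 mem_primes => /and3P[].
Qed.

Lemma abelem_elt_notin_cyclic p (gT : finGroupType) (E C : {group gT}) :
    prime p -> p.-abelem E -> #|E| = (p ^ 2)%N -> cyclic C ->
  exists2 v, v \in E :\: C & #[v] = p.
Proof.
move=> p_pr abE oE cycC; have [v Ev nCv] : exists2 v, v \in E & v \notin C.
  apply/subsetPn; apply: contraL cycC => sEC; apply/negP => /(cyclicS sEC).
  by rewrite (abelem_cyclic abE) oE pfactorK.
exists v; first by rewrite inE nCv.
by apply: abelem_order_p abE Ev _; apply: contraNneq nCv => ->.
Qed.

Lemma abelian_dprod_cycle_prime (gT : finGroupType) (A X : {group gT}) y :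
    abelian A -> X \subset A -> y \in A -> prime #[y] -> y \notin X ->
  X \x <[y]> = X <*> <[y]>.
Proof.
move=> cA sXA Ay y_pr nXy; apply: dprodEY.
  by apply: sub_abelian_cent2 cA _ sXA; rewrite cycle_subG.
by rewrite setIC prime_TIg // cycle_subG.
Qed.

Lemma prime_dvd_exponent p (gT : finGroupType) (G : {group gT}) :
  prime p -> p %| #|G| -> p %| exponent G.
Proof. by move=> p_pr /(Cauchy p_pr)[x Gx <-]; apply: dvdn_exponent. Qed.

Lemma pnat2_eq2 n : 2.-nat n -> 2 %| n -> ~~ (4 %| n) -> n = 2.
Proof.
move=> /p_natP[k ->]; case: k => [|[|k]] // _ /negP[].
by rewrite !expnS mulnA dvdn_mulr.
Qed.

Section KleinSubgroup.

Variables (gT : finGroupType) (A E : {group gT}).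
Hypotheses (cA : abelian A) (EA : E \in 'E_2^2(A)).

Let sEA : E \subset A. Proof. by case/pnElemPcard: EA. Qed.
Let abE : 2.-abelem E. Proof. by case/pnElemPcard: EA. Qed.
Let oE : #|E| = (2 ^ 2)%N. Proof. by case/pnElemPcard: EA. Qed.

Lemma Klein_extend_cyclic (rT : finGroupType) (C : {group gT}) :
    C \subset A -> cyclic C -> C \isog [set: rT] ->
  exists2 K : {group gT}, K \subset A & K \isog [set: rT * 'Z_2].
Proof.
move=> sCA cycC isoC.
have [v /setDP[Ev nCv] ov] := abelem_elt_notin_cyclic (p := 2) isT abE oE cycC.
have Av := subsetP sEA v Ev.
exists (C <*> <[v]>)%G; first by rewrite join_subG sCA cycle_subG.
have v_pr : prime #[v] by rewrite ov.
apply: dprod_isog_setT (abelian_dprod_cycle_prime cA sCA Av v_pr nCv) isoC _.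
exact: isog_cycle_Zp ov isT.
Qed.

Lemma Klein_exponent4_section : 4 %| exponent A -> has_section A Z4xZ2.
Proof.
have [w Aw ->] := exponent_witness (abelian_nil cA); move=> w4.
set x := w ^+ (#[w] %/ 4); have ox : #[x] = 4.
  have w_gt0 : 0 < #[w] %/ 4 by rewrite divn_gt0 // dvdn_leq.
  by rewrite orderXdiv ?dvdn_div // -{1}(divnK w4) mulKn.
have sXA : <[x]> \subset A by rewrite cycle_subG groupX.
have isoX := isog_cycle_Zp ox isT.
have [K sKA isoK] := Klein_extend_cyclic sXA (cycle_cyclic x) isoX.
exact: sub_has_section sKA isoK.
Qed.

Lemma Klein_odd_prime_section p :
  prime p -> odd p -> p %| #|A| -> has_section A (ZpxZ2sq p).
Proof.
move=> p_pr odd_p /(Cauchy p_pr)[z Az oz].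
have sZA : <[z]> \subset A by rewrite cycle_subG.
have isoZ := isog_cycle_Zp oz (prime_gt1 p_pr).
have [K sKA isoK] := Klein_extend_cyclic sZA (cycle_cyclic z) isoZ.
have cycK : cyclic K.
  rewrite (isog_cyclic isoK) cyclic_setT_prod ?Zp_cyclic //.
  by rewrite !card_Zp_setT ?prime_gt1 ?coprimen2.
have [L sLA isoL] := Klein_extend_cyclic sKA cycK isoK.
exact: sub_has_section sLA isoL.
Qed.

Lemma Klein_exponent_eq2 :
    ~ has_section A Z4xZ2 ->
    (forall p, prime p -> odd p -> p %| #|A| -> ~ has_section A (ZpxZ2sq p)) ->
  exponent A = 2.
Proof.
move=> noZ4xZ2 noZpxZ2sq; apply: pnat2_eq2.
- rewrite pnat_exponent; apply/pgroupP => p p_pr pA.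
  have [-> // | odd_p] := even_prime p_pr.
  by case: (noZpxZ2sq p p_pr odd_p pA); apply: Klein_odd_prime_section.
- apply: (prime_dvd_exponent (p := 2)) => //.
  by apply: dvdn_trans (cardSg sEA); rewrite oE.
by apply/negP => /Klein_exponent4_section.
Qed.

Lemma Klein_card_exponent2 : exponent A = 2 -> ~ has_section A Z2cube -> #|A| = 4.
Proof.
move=> expA2 noZ2cube; have abA : 2.-abelem A by rewrite exponent2_abelem ?expA2.
have r2A : 'r_2(A) = 2.
  apply/eqP; rewrite eqn_leq leqNgt; apply/andP; split.
    by apply/negP => /has_section_Z2cube.
  by apply/p_rank_geP; exists E.
by rewrite (card_pgroup (abelem_pgroup abA)) -(p_rank_abelem abA) r2A.
Qed.

End KleinSubgroup.

Lemma dihedral_rotation m : 1 < m -> exists x : 'D_(m.*2), #[x] = m.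
Proof.
move=> m_gt1.
have /isoGrp_hom/existsP[[x y] /= /eqP[defD xm y2 xy]] := Grp_dihedral m_gt1.
have x_dvd_m : #[x] %| m by rewrite order_dvdn xm.
have oy_le2 : #[y] <= 2 by apply: dvdn_leq; rewrite ?order_dvdn ?y2.
have nxy : <[y]> \subset 'N(<[x]>) by rewrite norms_cycle xy groupV cycle_id.
have m_le_x : #|'D_(m.*2)| <= #[x] * 2.
  rewrite -defD norm_joinEr // (leq_trans _ (leq_mul (leqnn _) oy_le2)) //.
  by rewrite /order mul_cardG leq_pmulr ?cardG_gt0.
rewrite (card_dihedral m_gt1) muln2 leq_double in m_le_x.
exists x; apply/eqP; rewrite eqn_leq m_le_x andbT.
exact: dvdn_leq (ltnW m_gt1) x_dvd_m.
Qed.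

Lemma cyclic_has_dihedral_section (gT : finGroupType) (G : {group gT}) :
  cyclic G -> ~~ odd #|G| -> has_section 'D_(#|G|.*2) G.
Proof.
move=> cycG even_G; have G_gt1 : 1 < #|G| by case: #|G| (cardG_gt0 G) even_G => [|[]].
have [x ox] := dihedral_rotation G_gt1.
apply: (sub_has_section (subsetT <[x]>)).
rewrite (isog_cyclic_card _ (cycle_cyclic x)) cycG; apply/eqP.
exact: esym ox.
Qed.

Lemma abelem4_isog_dihedral (gT : finGroupType) (G : {group gT}) :
  2.-abelem G -> #|G| = 4 -> G \isog 'D_4.
Proof.
move=> abG oG.
have [x /setDP[Gx _] ox] := abelem_elt_notin_cyclic (p := 2) isT abG oG (cyclic1 gT).
have [y /setDP[Gy nxy] oy] :=
  abelem_elt_notin_cyclic (p := 2) isT abG oG (cycle_cyclic x).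
have sxG : <[x]> \subset G by rewrite cycle_subG.
have y_pr : prime #[y] by rewrite oy.
have dxy := abelian_dprod_cycle_prime (abelem_abelian abG) sxG Gy y_pr nxy.
have defG : <[x]> <*> <[y]> = G.
  apply/eqP; rewrite eqEcard join_subG sxG cycle_subG Gy oG.
  by rewrite -(dprod_card dxy) -!orderE ox oy.
have x_neq_y : x != y by apply: contraNneq nxy => <-; apply: cycle_id.
rewrite joing_idl joing_idr in defG.
have := involutions_gen_dihedral ox oy x_neq_y; rewrite /=.
by rewrite -[<<_>>]/([set x] <*> [set y]) defG oG.
Qed.

Theorem lemma7 (gT : finGroupType) (A : {group gT}) (m : nat) :
  abelian A ->
  exponent A = m ->
  ~~ odd m ->
  ~ has_section A Z2cube ->
  ~ has_section A Z4xZ2 ->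
  (forall p, prime p -> odd p -> p %| m ->
     ~ has_section A (Zpsq p) /\ ~ has_section A (ZpxZ2sq p)) ->
  has_section [set: gsort 'D_(m.*2)] A.
Proof.
move=> cA expA even_m noZ2cube noZ4xZ2 noZp.
have {}noZp p : prime p -> odd p -> p %| #|A| ->
    ~ has_section A (Zpsq p) /\ ~ has_section A (ZpxZ2sq p).
  by move=> p_pr odd_p /(prime_dvd_exponent p_pr); rewrite expA; apply: noZp.
have [r2_le1 | /p_rank_geP[E EA]] := leqP 'r_2(A) 1.
  have cycA : cyclic A.
    by apply: abelian_cyclic_no_Zpsq => // p p_pr odd_p /(noZp p p_pr odd_p)[].
  have oA : #|A| = m by rewrite -expA exponent_cyclic.
  by rewrite -oA in even_m *; apply: cyclic_has_dihedral_section.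
have expA2 : exponent A = 2.
  by apply: (Klein_exponent_eq2 cA EA noZ4xZ2) => p p_pr odd_p /(noZp p p_pr odd_p)[].
have abA : 2.-abelem A by rewrite exponent2_abelem ?expA2.
have oA := Klein_card_exponent2 EA expA2 noZ2cube.
rewrite -expA expA2; apply: (sub_has_section (subxx _)).
by rewrite isog_sym; apply: abelem4_isog_dihedral.
Qed.
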